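(* Let $k$ be a field of characteristic $0$, $R=k[x_1,\dots,x_n]$, $\ell=x_1+\dots+x_n$, let $d_1,\dots,d_n$ be positive integers such that $I=(x_1^{d_1},\dots,x_{n-1}^{d_{n-1}},x_n^2,\ell^{d_n})$ is minimally generated by these elements, and let $(a_1,\dots,a_{n+1})\in R^{n+1}$ satisfy $a_1x_1^{d_1}+\dots+a_{n-1}x_{n-1}^{d_{n-1}}+a_nx_n^2+a_{n+1}\ell^{d_n}=0$. If $\sum_{i=1}^n(d_i-1)$ is odd, then $$c_1a_1x_1^{d_1-2}+\dots+c_{n-1}a_{n-1}x_{n-1}^{d_{n-1}-2}+a_n+c_na_{n+1}\ell^{d_n-2}\in I,$$ where $c_i=\sum_{j=0}^{\lfloor (d_i-1)/2\rfloor}(d_i-1-2j)^2$. In particular, when $n$ is odd, every relation $(a_1,\dots,a_{n+1})$ of $(x_1^2,\dots,x_n^2,\ell^2)$ (i.e. $\sum_{i=1}^n a_ix_i^2+a_{n+1}\ell^2=0$) satisfies $a_1+\dots+a_{n+1}\in(x_1^2,\dots,x_n^2,\ell^2)$.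
   Context: When $c_i=0$ the corresponding term (which may involve a negative exponent formally) is zero. *)

From HB Require Import structures.
From mathcomp Require Import all_boot all_order all_algebra.
From mathcomp Require Import mpoly.
Set Implicit Arguments. Unset Strict Implicit. Unset Printing Implicit Defensive.
Import Order.TTheory GRing.Theory.
Local Open Scope ring_scope.

Definition in_ideal (R : comRingType) (I : finType) (g : I -> R) (p : R) : Prop :=
  exists b : I -> R, p = \sum_(i : I) b i * g i.

Definition minimal_gens (R : comRingType) (I : finType) (g : I -> R) : Prop :=
  forall i : I, ~ (exists b : I -> R, g i = \sum_(j : I | j != i) b j * g j).

Definition is_relation (R : comRingType) (I : finType) (g : I -> R) (a : I -> R) : Prop :=
  \sum_(i : I) a i * g i = 0.

Definition ell (k : fieldType) (n : nat) : {mpoly k[n]} := \sum_(i < n) 'X_i.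

(* Variables are 0-based: 'X_i, i : 'I_n, paper's x_{i+1}; d : nat -> nat with
   d j = paper's d_{j+1}.  Index Some i <-> the i-th variable's generator,
   None <-> ell^{d_n}. *)
Definition gens (k : fieldType) (n : nat) (d : nat -> nat) (o : option 'I_n)
  : {mpoly k[n]} :=
  match o with
  | Some i => if val i == n.-1 then 'X_i ^+ 2 else 'X_i ^+ d (val i)
  | None => ell k n ^+ d n.-1
  end.

Definition cc (m : nat) : nat := (\sum_(j < ((m - 1)./2).+1) (m - 1 - 2 * j) ^ 2)%N.

(* c_1 a_1 x_1^{d_1-2} + ... + c_{n-1} a_{n-1} x_{n-1}^{d_{n-1}-2} + a_n
   + c_n a_{n+1} ell^{d_n-2}.  (When d_i = 1, c_i = 0 and the term is 0.) *)
Definition combo (k : fieldType) (n : nat) (d : nat -> nat)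
  (a : option 'I_n -> {mpoly k[n]}) : {mpoly k[n]} :=
  \sum_(i < n) (if val i == n.-1 then a (Some i)
                else (cc (d i))%:R * a (Some i) * 'X_i ^+ (d i - 2))
  + (cc (d n.-1))%:R * a None * ell k n ^+ (d n.-1 - 2).

(* Let J = (x_1^{δ_1}, ..., x_n^{δ_n}), s = Σ_i (δ_i - 1), E the Euler operator, and
     F = Σ_i ((δ_i - 1) ∂_i - x_i ∂_i^2),   G = Σ_i (3 (δ_i - 1) ∂_i^2 - 2 x_i ∂_i^3).
   F maps w x_i^{δ_i} into J, G maps it to 6 c_{δ_i} w x_i^{δ_i - 2} modulo J, and
   against multiplication by ℓ they satisfy [F, ℓ] = s - 2E and [G, ℓ] = 6F.
   Applying G to a relation a_ℓ ℓ^e + Σ_i a_i x_i^{δ_i} = 0 gives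
   6 Σ_i c_{δ_i} a_i x_i^{δ_i - 2} ≡ - G (ℓ^e a_ℓ) modulo J.  When s + e is odd, the
   operator s + 2 - e - 2E scales forms of degree m by the odd integer s + 2 - e - 2m,
   so in characteristic 0 it is invertible and a_ℓ = (s + 2 - e - 2E) b; the commutator
   rules then yield G (ℓ^e a_ℓ) = ℓ^e G a_ℓ + 6 c_e ℓ^{e-2} a_ℓ + 3 (F^2 (ℓ^e b) - ℓ^e F^2 b).
   Inverting s + 2 - e - 2E preserves the monomial ideal J and moves past ℓ^e up to a shift,
   so ℓ^e b ∈ J because ℓ^e a_ℓ ∈ J; hence F^2 (ℓ^e b) ∈ J and the combination lies in
   J + (ℓ^e).  The paper's ideal is the case δ_n = 2. *)

From HB Require Import structures.
From mathcomp Require Import all_boot all_order all_algebra.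
From mathcomp Require Import mpoly.
From mathcomp Require Import ring zify.
Set Implicit Arguments. Unset Strict Implicit. Unset Printing Implicit Defensive.
Import Order.TTheory GRing.Theory.
Local Open Scope ring_scope.

(** * Ideals generated by finite families *)

Section IdealMembership.
Variables (R : comNzRingType) (I : finType) (g : I -> R).

Lemma in_ideal0 : in_ideal g 0.
Proof. by exists (fun=> 0); rewrite big1 // => i _; rewrite mul0r. Qed.

Lemma in_idealD p q : in_ideal g p -> in_ideal g q -> in_ideal g (p + q).
Proof.
case=> [u ->] [v ->]; exists (fun i => u i + v i).
by rewrite -big_split; apply: eq_bigr => i _; rewrite mulrDl.
Qed.

Lemma in_idealMl c p : in_ideal g p -> in_ideal g (c * p).
Proof.
case=> [u ->]; exists (fun i => c * u i).
by rewrite mulr_sumr; apply: eq_bigr => i _; rewrite mulrA.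
Qed.

Lemma in_idealN p : in_ideal g p -> in_ideal g (- p).
Proof. by rewrite -mulN1r; apply: in_idealMl. Qed.

Lemma in_ideal_sum (J : finType) (F : J -> R) :
  (forall j, in_ideal g (F j)) -> in_ideal g (\sum_j F j).
Proof. by move=> gF; apply: big_ind => //; [exact: in_ideal0 | exact: in_idealD]. Qed.

Lemma in_ideal_gen i : in_ideal g (g i).
Proof.
exists (fun j => (j == i)%:R); rewrite (bigD1 i) //= eqxx mul1r big1 ?addr0 //.
by move=> j /negPf ->; rewrite mul0r.
Qed.

Lemma in_ideal_trans (J : finType) (h : J -> R) p :
  (forall j, in_ideal g (h j)) -> in_ideal h p -> in_ideal g p.
Proof. by move=> gh [u ->]; apply: in_ideal_sum => i; apply: in_idealMl. Qed.

Lemma in_ideal_eq (h : I -> R) p : g =1 h -> in_ideal h p -> in_ideal g p.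
Proof. by move=> gh; apply: in_ideal_trans => i; rewrite -gh; apply: in_ideal_gen. Qed.

Lemma in_ideal_additive (f : {additive R -> R}) p :
  (forall i w, in_ideal g (f (w * g i))) -> in_ideal g p -> in_ideal g (f p).
Proof. by move=> fg [u ->]; rewrite raddf_sum; apply: in_ideal_sum. Qed.

End IdealMembership.

Lemma big_option (R : Type) (idx : R) (op : Monoid.law idx) (T : finType)
    (F : option T -> R) :
  \big[op/idx]_(o : option T) F o = op (F None) (\big[op/idx]_(t : T) F (Some t)).
Proof.
have -> : index_enum (option T) = None :: map Some (index_enum T).
  by rewrite /index_enum !unlock /= /option_enum unlock.
by rewrite big_cons big_map.
Qed.

(** * Differential operators *)

Section Derivatives.
Variables (k : comNzRingType) (n : nat).
Local Notation R := {mpoly k[n]}.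
Implicit Types (p : R).

Lemma mderivX1 i j : ('X_j : R)^`M(i) = (j == i)%:R.
Proof.
rewrite mderivX mnm1E; case: eqP => [->|_]; last by rewrite scale0r.
by rewrite -{1}[U_(i)%MM]add0m addmK mpolyX0 scale1r.
Qed.

Lemma mderiv_natr i m : (m%:R : R)^`M(i) = 0.
Proof. by rewrite -mpolyC_nat mderivC. Qed.

Lemma mderivXnS i m : ('X_i ^+ m.+1 : R)^`M(i) = m.+1%:R * 'X_i ^+ m.
Proof.
elim: m => [|m IH]; first by rewrite expr1 mderivX1 eqxx expr0 mulr1.
by rewrite exprS mderivM IH mderivX1 eqxx /= !exprS; ring.
Qed.

Lemma mderivXn i m : ('X_i ^+ m : R)^`M(i) = m%:R * 'X_i ^+ m.-1.
Proof. by case: m => [|m]; rewrite ?mderivXnS // expr0 -(mulr1n 1) mderiv_natr mul0r. Qed.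

Lemma mderivMr_const i p q : q^`M(i) = 0 -> (p * q)^`M(i) = p^`M(i) * q.
Proof. by move=> q'0; rewrite mderivM q'0 mulr0 addr0. Qed.

Lemma mderivXn_neq i j m : j != i -> ('X_j ^+ m : R)^`M(i) = 0.
Proof.
move=> /negPf ji; elim: m => [|m IH]; first by rewrite expr0 -(mulr1n 1) mderiv_natr.
by rewrite exprS mderivMr_const ?IH // mderivX1 ji mul0r.
Qed.

Lemma sum_natr_eq (F : 'I_n -> R) j : \sum_i (j == i)%:R * F i = F j.
Proof.
rewrite (bigD1 j) //= eqxx mul1r big1 ?addr0 // => i.
by rewrite eq_sym => /negPf ->; rewrite mul0r.
Qed.

Lemma raddf_natr (f : {additive R -> R}) m p : f (m%:R * p) = m%:R * f p.
Proof. by rewrite !mulr_natl raddfMn. Qed.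

End Derivatives.

Lemma ccSS m : cc m.+3 = (cc m.+1 + m.+2 ^ 2)%N.
Proof.
rewrite /cc !subSS !subn0 /= big_ord_recl /= muln0 subn0 addnC; congr (_ + _)%N.
by apply: eq_bigr => j _; congr (_ ^ 2)%N; rewrite /bump /=; lia.
Qed.

Lemma cc_closed m : (6 * cc m = m.+1 * m * m.-1)%N.
Proof.
elim/ltn_ind: m => -[|[|[|m]]] IH; rewrite ?ccSS; try by rewrite /cc big_ord1.
by rewrite mulnDr IH //; nia.
Qed.

Lemma cc2 : cc 2 = 1%N.
Proof. by rewrite /cc big_ord1. Qed.

Section Operators.
Variables (k : fieldType) (n : nat).
Local Notation R := {mpoly k[n]}.
Local Notation ell := (ell k n).
Implicit Types (p : R).

Definition euler p : R := \sum_(i < n) 'X_i * p^`M(i).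

Lemma euler_is_linear : linear euler.
Proof.
move=> c p q; rewrite /euler scaler_sumr -big_split; apply: eq_bigr => i _.
by rewrite !linearP /= -!mul_mpolyC; ring.
Qed.
HB.instance Definition _ := GRing.isLinear.Build k R R _ euler euler_is_linear.

Lemma eulerB : {morph euler : p q / p - q}. Proof. exact: raddfB. Qed.
Lemma euler_natr m p : euler (m%:R * p) = m%:R * euler p. Proof. exact: raddf_natr. Qed.

Lemma euler_mderiv i p : (euler p)^`M(i) = p^`M(i) + euler p^`M(i).
Proof.
rewrite /euler raddf_sum /=; under eq_bigr do rewrite mderivM mderivX1 eq_sym mderiv_comm.
by rewrite big_split /= sum_natr_eq.
Qed.

Lemma euler_mulX j p : euler ('X_j * p) = 'X_j * euler p + 'X_j * p.
Proof.
rewrite /euler; under eq_bigr do rewrite mderivM mderivX1 mulrDr mulrCA.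
rewrite big_split /= sum_natr_eq mulr_sumr addrC; congr (_ + _).
by apply: eq_bigr => i _; rewrite mulrCA.
Qed.

Lemma euler_mul_ell p : euler (ell * p) = ell * euler p + ell * p.
Proof.
by rewrite /ell !mulr_suml raddf_sum /= (eq_bigr _ (fun j _ => euler_mulX j p)) big_split.
Qed.

Lemma euler_mul_ellX m p : euler (ell ^+ m * p) = ell ^+ m * euler p + m%:R * (ell ^+ m * p).
Proof.
elim: m => [|m IH]; first by rewrite expr0 !mul1r mul0r addr0.
by rewrite exprS -mulrA euler_mul_ell IH; ring.
Qed.

Variable del : 'I_n -> nat.

Definition opF_at i p := (del i).-1%:R * p^`M(i) - 'X_i * p^`M(i)^`M(i).
Definition opF p := \sum_(i < n) opF_at i p.
Definition opG_at i p :=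
  3%:R * (del i).-1%:R * p^`M(i)^`M(i) - 2%:R * 'X_i * p^`M(i)^`M(i)^`M(i).
Definition opG p := \sum_(i < n) opG_at i p.
Definition socle_deg := (\sum_(i < n) (del i).-1)%N.

Lemma opF_is_linear : linear opF.
Proof.
move=> c p q; rewrite /opF scaler_sumr -big_split; apply: eq_bigr => i _.
by rewrite /opF_at !linearP /= -!mul_mpolyC; ring.
Qed.
HB.instance Definition _ := GRing.isLinear.Build k R R _ opF opF_is_linear.

Lemma opFD : {morph opF : p q / p + q}. Proof. exact: raddfD. Qed.
Lemma opFB : {morph opF : p q / p - q}. Proof. exact: raddfB. Qed.
Lemma opF_natr m p : opF (m%:R * p) = m%:R * opF p. Proof. exact: raddf_natr. Qed.

Lemma opG_is_linear : linear opG.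
Proof.
move=> c p q; rewrite /opG scaler_sumr -big_split; apply: eq_bigr => i _.
by rewrite /opG_at !linearP /= -!mul_mpolyC; ring.
Qed.
HB.instance Definition _ := GRing.isLinear.Build k R R _ opG opG_is_linear.

Lemma opGB : {morph opG : p q / p - q}. Proof. exact: raddfB. Qed.
Lemma opG_natr m p : opG (m%:R * p) = m%:R * opG p. Proof. exact: raddf_natr. Qed.

Lemma opF_at_mulX i j p : opF_at i ('X_j * p) =
  'X_j * opF_at i p + (j == i)%:R * ((del i).-1%:R * p - 2%:R * 'X_i * p^`M(i)).
Proof. by rewrite /opF_at !(mderivM, mderivD, mderivX1, mderiv_natr); ring. Qed.

Lemma opG_at_mulX i j p : opG_at i ('X_j * p) =
  'X_j * opG_at i p + (j == i)%:R * (6%:R * opF_at i p).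
Proof. by rewrite /opG_at /opF_at !(mderivM, mderivD, mderivX1, mderiv_natr); ring. Qed.

Lemma euler_opF p : euler (opF p) = opF (euler p) - opF p.
Proof.
rewrite /opF raddf_sum /= -sumrB; apply: eq_bigr => i _.
by rewrite /opF_at eulerB euler_natr euler_mulX !(euler_mderiv, mderivD); ring.
Qed.

Lemma opF_mulX j p :
  opF ('X_j * p) = 'X_j * opF p + (del j).-1%:R * p - 2%:R * 'X_j * p^`M(j).
Proof.
rewrite /opF (eq_bigr _ (fun i _ => opF_at_mulX i j p)) big_split /=.
by rewrite sum_natr_eq -mulr_sumr addrA.
Qed.

Lemma opG_mulX j p : opG ('X_j * p) = 'X_j * opG p + 6%:R * opF_at j p.
Proof.
by rewrite /opG (eq_bigr _ (fun i _ => opG_at_mulX i j p)) big_split /= sum_natr_eq -mulr_sumr.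
Qed.

Lemma opF_mul_ell p : opF (ell * p) = ell * opF p + socle_deg%:R * p - 2%:R * euler p.
Proof.
rewrite /ell !mulr_suml raddf_sum /= (eq_bigr _ (fun j _ => opF_mulX j p)) !big_split /=.
rewrite sumrN /socle_deg natr_sum mulr_suml /euler mulr_sumr.
by congr (_ + _ - _); apply: eq_bigr => i _; rewrite mulrA.
Qed.

Lemma opG_mul_ell p : opG (ell * p) = ell * opG p + 6%:R * opF p.
Proof.
rewrite /ell !mulr_suml raddf_sum /= (eq_bigr _ (fun j _ => opG_mulX j p)) big_split /=.
by rewrite /opF mulr_sumr.
Qed.

Lemma opF_mul_ellX m p : opF (ell ^+ m.+1 * p) = ell ^+ m.+1 * opF p
  + m.+1%:R * (ell ^+ m * (socle_deg%:R * p - m%:R * p - 2%:R * euler p)).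
Proof.
elim: m => [|m IH]; first by rewrite expr1 expr0 opF_mul_ell; ring.
by rewrite exprS -mulrA opF_mul_ell IH euler_mul_ellX !exprS; ring.
Qed.

Lemma opG_mul_ellX m p : opG (ell ^+ m.+2 * p) = ell ^+ m.+2 * opG p
  + 6%:R * m.+2%:R * (ell ^+ m.+1 * opF p)
  + m.+2%:R * m.+1%:R * (ell ^+ m * (3%:R * socle_deg%:R * p - 6%:R * euler p - 2%:R * m%:R * p)).
Proof.
elim: m => [|m IH]; first by rewrite exprS -mulrA !opG_mul_ell opF_mul_ell expr1; ring.
by rewrite exprS -mulrA opG_mul_ell IH opF_mul_ellX !exprS; ring.
Qed.

Lemma opG_ellXn_commutator e b b' : (0 < e)%N ->
  b = (socle_deg + 2)%:R * b' - e%:R * b' - 2%:R * euler b' ->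
  opG (ell ^+ e * b) - ell ^+ e * opG b
    - 3%:R * (opF (opF (ell ^+ e * b')) - ell ^+ e * opF (opF b'))
  = (6 * cc e)%:R * (ell ^+ (e - 2) * b).
Proof.
case: e => [|[|m]] // _; rewrite cc_closed /= => ->.
  rewrite mul0r expr1 opG_mul_ell.
  rewrite !(opFB, opFD, opF_natr, opF_mul_ell, opGB, opG_natr, eulerB, euler_natr, euler_opF).
  ring.
rewrite opG_mul_ellX !opF_mul_ellX.
rewrite !(opFB, opFD, opF_natr, opF_mul_ellX, opGB, opG_natr, eulerB, euler_natr, euler_opF).
rewrite !subSS subn0 !exprS; ring.
Qed.

Lemma opF_at_mulr_const i p q : q^`M(i) = 0 -> opF_at i (p * q) = opF_at i p * q.
Proof. by move=> q'0; rewrite /opF_at !mderivMr_const //; ring. Qed.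

Lemma opG_at_mulr_const i p q : q^`M(i) = 0 -> opG_at i (p * q) = opG_at i p * q.
Proof. by move=> q'0; rewrite /opG_at !mderivMr_const //; ring. Qed.

Lemma opF_at_mulXn i p : opF_at i (p * 'X_i ^+ del i) =
  (opF_at i p - 2%:R * (del i)%:R * p^`M(i)) * 'X_i ^+ del i.
Proof.
rewrite /opF_at !(mderivM, mderivD, mderivXn, mderiv_natr).
by case: (del i) => [|[|m]]; rewrite /= ?exprS; ring.
Qed.

Lemma opG_at_mulXn i p : opG_at i (p * 'X_i ^+ del i) =
  (6 * cc (del i))%:R * (p * 'X_i ^+ (del i - 2))
  + (opG_at i p - 6%:R * (del i)%:R * p^`M(i)^`M(i)) * 'X_i ^+ del i.
Proof.
rewrite /opG_at cc_closed !(mderivM, mderivD, mderivXn, mderiv_natr, mderiv0).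
by case: (del i) => [|[|[|m]]]; rewrite /= ?subSS ?subn0 ?exprS; ring.
Qed.

Lemma opF_mulXn j p :
  opF (p * 'X_j ^+ del j) = (opF p - 2%:R * (del j)%:R * p^`M(j)) * 'X_j ^+ del j.
Proof.
rewrite /opF (bigD1 j) //= opF_at_mulXn [in RHS](bigD1 j) //=.
rewrite (eq_bigr (fun i => opF_at i p * 'X_j ^+ del j)) -?mulr_suml; first ring.
by move=> i ij; rewrite opF_at_mulr_const // mderivXn_neq // eq_sym.
Qed.

Lemma opG_mulXn j p : opG (p * 'X_j ^+ del j) =
  (6 * cc (del j))%:R * (p * 'X_j ^+ (del j - 2))
  + (opG p - 6%:R * (del j)%:R * p^`M(j)^`M(j)) * 'X_j ^+ del j.
Proof.
rewrite /opG (bigD1 j) //= opG_at_mulXn [in RHS](bigD1 j) //=.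
rewrite (eq_bigr (fun i => opG_at i p * 'X_j ^+ del j)) -?mulr_suml; first ring.
by move=> i ij; rewrite opG_at_mulr_const // mderivXn_neq // eq_sym.
Qed.

End Operators.

(** * Inverting the shifted Euler operator *)

Section InverseEuler.
Variables (k : fieldType) (n : nat).
Local Notation R := {mpoly k[n]}.
Implicit Types (p q : R) (t : k).

Lemma mcoeff_msupp_sum (c : 'X_{1..n} -> k) p m :
  (\sum_(m' <- msupp p) (c m' * p@_m') *: 'X_[m'])@_m = c m * p@_m.
Proof.
rewrite raddf_sum /=; under eq_bigr do rewrite mcoeffZ mcoeffX mulr_natr mulrb.
rewrite -big_mkcond /=; have [pm|/memN_msupp_eq0 pm0] := boolP (m \in msupp p).
  by rewrite -big_filter (filter_pred1_uniq (msupp_uniq p) pm) big_seq1.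
by rewrite pm0 mulr0 big1 // => m' /eqP ->; rewrite pm0 mulr0.
Qed.

Lemma euler_mpolyX m : euler ('X_[m] : R) = (mdeg m)%:R *: 'X_[m].
Proof.
rewrite /euler (eq_bigr (fun i => (m i)%:R *: ('X_[m] : R))).
  by rewrite -scaler_suml -natr_sum mdegE.
move=> i _; rewrite mderivX -scalerAr.
have [->|mi_neq0] := eqVneq (m i) 0%N; first by rewrite !scale0r.
by rewrite -mpolyXD addmC submK // lep1mP.
Qed.

Lemma mcoeff_euler q m : (euler q)@_m = (mdeg m)%:R * q@_m.
Proof.
rewrite {1}[q]mpolyE [euler _]raddf_sum /=.
under eq_bigr do rewrite linearZ /= euler_mpolyX scalerA mulrC.
exact: mcoeff_msupp_sum.
Qed.

(* The inverse of t - 2 euler: the monomial 'X_[m] is scaled by (t - 2 mdeg m)^-1,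
   which is the junk value 0 when t = 2 mdeg m. *)
Definition inv_euler t p : R :=
  \sum_(m <- msupp p) ((t - 2%:R * (mdeg m)%:R)^-1 * p@_m) *: 'X_[m].

Lemma mcoeff_inv_euler t p m : (inv_euler t p)@_m = (t - 2%:R * (mdeg m)%:R)^-1 * p@_m.
Proof. exact: mcoeff_msupp_sum. Qed.

Lemma inv_euler_is_linear t : linear (inv_euler t).
Proof.
move=> c p q; apply/mpolyP => m.
by rewrite mcoeffD mcoeffZ !mcoeff_inv_euler mcoeffD mcoeffZ; ring.
Qed.
HB.instance Definition _ t :=
  GRing.isLinear.Build k R R _ (inv_euler t) (inv_euler_is_linear t).

Lemma inv_eulerK t p : (forall m : 'X_{1..n}, t != 2%:R * (mdeg m)%:R) ->
  t *: inv_euler t p - 2%:R *: euler (inv_euler t p) = p.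
Proof.
move=> t_neq; apply/mpolyP => m.
rewrite mcoeffB !mcoeffZ mcoeff_euler mcoeff_inv_euler; field.
by rewrite subr_eq0.
Qed.

Lemma inv_euler_mul_homog t d p g : g \is d.-homog ->
  inv_euler t (p * g) = inv_euler (t - 2%:R * d%:R) p * g.
Proof.
move=> g_homog; apply/mpolyP => m; rewrite mcoeff_inv_euler !mcoeffM mulr_sumr.
apply: eq_bigr => -[m1 m2] /= /eqP m_eq; rewrite mcoeff_inv_euler.
have [mdeg_m2|/(dhomog_nemf_coeff g_homog) ->] := eqVneq (mdeg m2) d; last by rewrite !mulr0.
have -> : (mdeg m)%:R = (mdeg m1)%:R + d%:R :> k.
  by rewrite -natrD -mdeg_m2 -mdegD -m_eq.
by rewrite mulrA; congr (_^-1 * _ * _); ring.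
Qed.

Lemma dhomog_Xn i e : ('X_i ^+ e : R) \is e.-homog.
Proof. by rewrite -[X in X.-homog]mul1n; apply: dhomogMn; rewrite dhomogX /= mdeg1. Qed.

Lemma dhomog_ellXn e : ell k n ^+ e \is e.-homog.
Proof.
rewrite -[X in X.-homog]mul1n; apply: dhomogMn; apply: rpred_sum => i _.
by rewrite dhomogX /= mdeg1.
Qed.

End InverseEuler.

Lemma pchar0_natr_eq (R : idomainType) : [pchar R] =i pred0 ->
  forall x y, (x%:R == y%:R :> R) = (x == y).
Proof.
move=> R0 x y; wlog le_yx : x y / (y <= x)%N.
  by move=> W; case: (leqP y x) => [|/ltnW] /W //; rewrite eq_sym => ->; rewrite eq_sym.
by rewrite -subr_eq0 -natrB // ((pcharf0P R).1 R0) subn_eq0 eqn_leq le_yx andbT.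
Qed.

Section Combination.
Variables (k : fieldType) (n : nat) (del : 'I_n -> nat) (e : nat).
Local Notation R := {mpoly k[n]}.
Local Notation ell := (ell k n).

Definition xpows (i : 'I_n) : R := 'X_i ^+ del i.
Definition xpows_ell (o : option 'I_n) : R :=
  if o is Some i then xpows i else ell ^+ e.

Definition cc_combo (a : option 'I_n -> R) : R :=
  \sum_(i < n) (cc (del i))%:R * a (Some i) * 'X_i ^+ (del i - 2)
  + (cc e)%:R * a None * ell ^+ (e - 2).

Lemma in_xpows_opF p : in_ideal xpows p -> in_ideal xpows (opF del p).
Proof. by apply: in_ideal_additive => i w /=; rewrite opF_mulXn; apply/in_idealMl/in_ideal_gen. Qed.

Lemma in_xpows_inv_euler t p : in_ideal xpows p -> in_ideal xpows (inv_euler t p).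
Proof.
apply: in_ideal_additive => i w /=.
by rewrite (inv_euler_mul_homog _ _ (dhomog_Xn _ _ _)); apply/in_idealMl/in_ideal_gen.
Qed.

Lemma in_xpows_ell p : in_ideal xpows p -> in_ideal xpows_ell p.
Proof. by apply: in_ideal_trans => i; apply: (in_ideal_gen xpows_ell (Some i)). Qed.

Lemma relation_xpows_ell a : is_relation xpows_ell a ->
  \sum_(i < n) a (Some i) * xpows i = - (a None * ell ^+ e).
Proof. by rewrite /is_relation big_option /= addrC => /eqP; rewrite addr_eq0 => /eqP. Qed.

Lemma six_cc_combo a b' : is_relation xpows_ell a -> (0 < e)%N ->
  a None = (socle_deg del + 2)%:R * b' - e%:R * b' - 2%:R * euler b' ->
  6%:R * cc_combo a =
    - \sum_(i < n) (opG del (a (Some i)) - 6%:R * (del i)%:R * (a (Some i))^`M(i)^`M(i)) * xpows i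
    - 3%:R * opF del (opF del (ell ^+ e * b'))
    + ell ^+ e * (3%:R * opF del (opF del b') - opG del (a None)).
Proof.
move=> /relation_xpows_ell rel e_gt0 b_eq.
have opG_rel : \sum_(i < n) opG del (a (Some i) * xpows i) = - opG del (ell ^+ e * a None).
  by rewrite -raddf_sum /= rel raddfN /= mulrC.
have var_term i : 6%:R * ((cc (del i))%:R * a (Some i) * 'X_i ^+ (del i - 2)) =
    opG del (a (Some i) * xpows i)
    - (opG del (a (Some i)) - 6%:R * (del i)%:R * (a (Some i))^`M(i)^`M(i)) * xpows i.
  by rewrite /xpows opG_mulXn natrM; ring.
have ell_term : 6%:R * ((cc e)%:R * a None * ell ^+ (e - 2)) =
    opG del (ell ^+ e * a None) - ell ^+ e * opG del (a None)
    - 3%:R * (opF del (opF del (ell ^+ e * b')) - ell ^+ e * opF del (opF del b')).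
  by rewrite (opG_ellXn_commutator e_gt0 b_eq) natrM -!mulrA [a None * _]mulrC.
rewrite /cc_combo mulrDr mulr_sumr (eq_bigr _ (fun i _ => var_term i)) sumrB opG_rel.
rewrite ell_term; move: (opG del _) (\sum_(i < n) _) (opF del (opF del _)) => GLa S FFLb'.
by ring.
Qed.

End Combination.

Theorem cc_combo_in_ideal (k : fieldType) (chark : [pchar k] =i pred0) (n : nat)
    (del : 'I_n -> nat) (e : nat) (a : option 'I_n -> {mpoly k[n]}) :
  (0 < e)%N -> odd (socle_deg del + e) -> is_relation (xpows_ell k del e) a ->
  in_ideal (xpows_ell k del e) (cc_combo del e a).
Proof.
move=> e_gt0 odd_de rel.
pose t : k := (socle_deg del + 2)%:R - e%:R.
have t_neq (m : 'X_{1..n}) : t != 2%:R * (mdeg m)%:R.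
  rewrite /t subr_eq -natrM -natrD pchar0_natr_eq //; apply/eqP => deg_eq.
  move: odd_de; have -> : (socle_deg del + e = 2 * (mdeg m + e - 1))%N by lia.
  by rewrite oddM.
pose b' := inv_euler t (a None).
have b_eq : a None = (socle_deg del + 2)%:R * b' - e%:R * b' - 2%:R * euler b'.
  by rewrite -{1}(inv_eulerK (a None) t_neq) -!mul_mpolyC rmorphB /= !mpolyC_nat mulrBl.
have ell_b' : in_ideal (xpows k del) (ell k n ^+ e * b').
  rewrite mulrC /b' -[t](addrK (2%:R * e%:R)) -inv_euler_mul_homog ?dhomog_ellXn //.
  apply: in_xpows_inv_euler; rewrite -[_ * _]opprK -(relation_xpows_ell rel).
  by apply/in_idealN/in_ideal_sum => i; apply/in_idealMl/in_ideal_gen.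
have six : in_ideal (xpows_ell k del e) (6%:R * cc_combo del e a).
  rewrite (six_cc_combo rel e_gt0 b_eq); apply: in_idealD; first apply: in_idealD.
  - by apply/in_xpows_ell/in_idealN/in_ideal_sum => i; apply/in_idealMl/in_ideal_gen.
  - by apply/in_idealN/in_idealMl/in_xpows_ell/in_xpows_opF/in_xpows_opF.
  - by rewrite mulrC; apply: in_idealMl (in_ideal_gen _ None).
have six_unit : (6%:R : k) != 0 by rewrite ((pcharf0P k).1 chark).
have -> : cc_combo del e a = (6%:R^-1)%:MP * (6%:R * cc_combo del e a).
  by rewrite mulrA -mpolyC_nat -rmorphM mulVf // rmorph1 mul1r.
exact: in_idealMl.
Qed.

Section PaperGenerators.
Variables (k : fieldType) (n : nat) (d : nat -> nat).

Definition var_exp (i : 'I_n.+1) : nat := if val i == n then 2 else d i.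

Lemma gens_var_exp : gens k d =1 xpows_ell k var_exp (d n).
Proof. by case=> [i|] //=; rewrite /xpows /var_exp; case: ifP. Qed.

Lemma combo_var_exp (a : option 'I_n.+1 -> {mpoly k[n.+1]}) :
  combo d a = cc_combo var_exp (d n) a.
Proof.
rewrite /combo /cc_combo /var_exp /=; congr (_ + _); apply: eq_bigr => i _.
by case: ifP => // _; rewrite cc2 subnn expr0 mulr1 mul1r.
Qed.

Lemma socle_deg_var_exp : (0 < d n)%N ->
  (socle_deg var_exp + d n = \sum_(j < n.+1) (d j - 1) + 2)%N.
Proof.
move=> dn_gt0; rewrite /socle_deg !big_ord_recr /= /var_exp /= eqxx.
under eq_bigr => i _ do rewrite /= ltn_eqF //.
under [X in (_ = X + _ + _)%N]eq_bigr => i _ do rewrite subn1.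
lia.
Qed.

End PaperGenerators.

Lemma combo_in_ideal (k : fieldType) (chark : [pchar k] =i pred0) (n : nat)
    (d : nat -> nat) (a : option 'I_n.+1 -> {mpoly k[n.+1]}) :
  (0 < d n)%N -> is_relation (gens k d) a -> odd (\sum_(j < n.+1) (d j - 1)) ->
  in_ideal (gens k d) (combo d a).
Proof.
move=> dn_gt0 rel odd_d; apply: (in_ideal_eq (gens_var_exp k d)).
rewrite combo_var_exp; apply: cc_combo_in_ideal => //.
  by rewrite socle_deg_var_exp // addn2 /= negbK.
by move: rel; rewrite /is_relation; under eq_bigr do rewrite gens_var_exp.
Qed.

Lemma combo_const2 (k : fieldType) (n : nat) (a : option 'I_n -> {mpoly k[n]}) :
  combo (fun=> 2%N) a = \sum_(o : option 'I_n) a o.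
Proof.
rewrite /combo big_option cc2 subnn expr0 !mulr1 mul1r addrC; congr (_ + _).
by apply: eq_bigr => i _; case: ifP; rewrite // expr0 mulr1 mul1r.
Qed.

Unset Implicit Arguments.

Theorem mainTheorem13 (k : fieldType) (chark : [pchar k] =i pred0)
  (n : nat) (n_gt0 : (0 < n)%N) :
  (forall (d : nat -> nat) (a : option 'I_n -> {mpoly k[n]}),
     (forall j, (j < n)%N -> (0 < d j)%N) ->
     minimal_gens (@gens k n d) ->
     is_relation (@gens k n d) a ->
     odd (\sum_(j < n) (d j - 1)) ->
     in_ideal (@gens k n d) (@combo k n d a))
  /\
  (odd n ->
   forall a : option 'I_n -> {mpoly k[n]},
     is_relation (@gens k n (fun _ => 2%N)) a ->
     in_ideal (@gens k n (fun _ => 2%N)) (\sum_(o : option 'I_n) a o)).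
Proof.
case: n n_gt0 => // n _; split=> [d a d_gt0 _ rel odd_d | odd_n a rel].
  exact: combo_in_ideal (d_gt0 n (ltnSn n)) rel odd_d.
rewrite -combo_const2; apply: combo_in_ideal => //.
by rewrite sum_nat_const card_ord muln1.
Qed.
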